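(* Let $\mathfrak{A}$ be an atomic weakly associative relation algebra and let $\mathfrak{B}$ be its suitable structure. Then $\mathfrak{Cm}\,\mathfrak{B}$ satisfies the merry-go-round identities MGR$_n$ for all $2\le n<\omega$; in particular, for every $X\subseteq B$ and all $\kappa,\lambda,\mu$ with $\{\kappa,\lambda,\mu\}=\{0,1,2\}$, $$T^*_\kappa(E_{\kappa\lambda}\cap T^*_\lambda(E_{\lambda\mu}\cap T^*_\mu(E_{\mu\kappa}\cap T^*_\kappa X)))=T^*_\kappa(E_{\kappa\mu}\cap T^*_\mu(E_{\mu\lambda}\cap T^*_\lambda(E_{\lambda\kappa}\cap T^*_\kappa X))).$$
   Context: WA: algebras $\langle A,+,\overline{\phantom{x}},;,\breve{\phantom{x}},1'\rangle$ with $x\cdot y=\overline{\overline{x}+\overline{y}}$, $0'=\overline{1'}$, $1=1'+0'$, $0=\overline{1}$, satisfying for all $x,y,z$: $x+y=y+x$; $x+(y+z)=(x+y)+z$; $\overline{\overline{x}+\overline{y}}+\overline{\overline{x}+y}=x$; $((x\cdot 1');1);1=(x\cdot1');1$; $(x+y);z=x;z+y;z$; $x;1'=x$; $\breve{\breve{x}}=x$; $\breve{(x+y)}=\breve{x}+\breve{y}$; $\breve{(x;y)}=\breve{y};\breve{x}$; $\breve{x};\overline{x;y}+\overline{y}=\overline{y}$. Suitable structure: $B=\{s\in{}^3\mathrm{At}(\mathfrak{A}): s_2;s_0\ge s_1\}$; $T_\kappa=\{\langle s,t\rangle\in B\times B:s_\kappa=t_\kappa\}$; $E_{\kappa\kappa}=B$;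 for distinct $\kappa,\lambda$ with third index $\mu$, $E_{\kappa\lambda}=\{s\in B:s_\mu\le1'\}$. $\mathfrak{Cm}\,\mathfrak{B}=\langle\mathcal{P}(B),\cup,\cap,B\setminus\cdot,\emptyset,B,T_\kappa^*,E_{\kappa\lambda}\rangle_{\kappa,\lambda<3}$, $T_\kappa^*(X)=\{y\in B:\exists x\in X\ \langle y,x\rangle\in T_\kappa\}$, with $c_\kappa=T^*_\kappa$, $d_{\kappa\lambda}=E_{\kappa\lambda}$, $\cdot=\cap$. Merry-go-round identities: with $s^\kappa_\lambda x=c_\kappa(d_{\kappa\lambda}\cdot x)$ for $\kappa\ne\lambda$, MGR$_n$ is the set of identities $s^\lambda_{\kappa_1}s^{\kappa_1}_{\kappa_2}\cdots s^{\kappa_{n-1}}_{\kappa_n}s^{\kappa_n}_\lambda c_\lambda x=s^\lambda_{\kappa_n}s^{\kappa_n}_{\kappa_1}s^{\kappa_1}_{\kappa_2}\cdots s^{\kappa_{n-2}}_{\kappa_{n-1}}s^{\kappa_{n-1}}_\lambda c_\lambda x$ for distinct $\lambda,\kappa_1,\dots,\kappa_n<3$ (vacuous when $n\ge3$). *)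

From mathcomp Require Import all_boot.
Set Implicit Arguments. Unset Strict Implicit. Unset Printing Implicit Defensive.

Record WA := {
  wa_car :> Type;
  wa_add : wa_car -> wa_car -> wa_car;
  wa_compl : wa_car -> wa_car;
  wa_comp : wa_car -> wa_car -> wa_car;
  wa_conv : wa_car -> wa_car;
  wa_id : wa_car }.

Section Ops.
Variable A : WA.
Definition wa_mul (x y : A) : A := wa_compl (wa_add (wa_compl x) (wa_compl y)).
Definition wa_diw : A := wa_compl (wa_id A).
Definition wa_top : A := wa_add (wa_id A) wa_diw.
Definition wa_bot : A := wa_compl wa_top.
Definition wa_le (x y : A) : Prop := wa_add x y = y.

Definition is_WA : Prop :=
  (forall x y : A, wa_add x y = wa_add y x) /\
      (forall x y z : A, wa_add x (wa_add y z) = wa_add (wa_add x y) z) /\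
      (forall x y : A, wa_add (wa_compl (wa_add (wa_compl x) (wa_compl y)))
                              (wa_compl (wa_add (wa_compl x) y)) = x) /\
      (forall x : A, wa_comp (wa_comp (wa_mul x (wa_id A)) wa_top) wa_top
                     = wa_comp (wa_mul x (wa_id A)) wa_top) /\
      (forall x y z : A, wa_comp (wa_add x y) z = wa_add (wa_comp x z) (wa_comp y z)) /\
      (forall x : A, wa_comp x (wa_id A) = x) /\
      (forall x : A, wa_conv (wa_conv x) = x) /\
      (forall x y : A, wa_conv (wa_add x y) = wa_add (wa_conv x) (wa_conv y)) /\
      (forall x y : A, wa_conv (wa_comp x y) = wa_comp (wa_conv y) (wa_conv x)) /\
      (forall x y : A, wa_add (wa_comp (wa_conv x) (wa_compl (wa_comp x y))) (wa_compl y)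
                       = wa_compl y).

Definition is_atom (a : A) : Prop :=
  a <> wa_bot /\ forall b : A, wa_le b a -> b = wa_bot \/ b = a.

Definition atomic : Prop :=
  forall x : A, x <> wa_bot -> exists2 a, is_atom a & wa_le a x.

Definition triple := 'I_3 -> A.
Definition i0 : 'I_3 := @Ordinal 3 0 isT.
Definition i1 : 'I_3 := @Ordinal 3 1 isT.
Definition i2 : 'I_3 := @Ordinal 3 2 isT.

Definition inB (s : triple) : Prop :=
  (forall i, is_atom (s i)) /\ wa_le (s i1) (wa_comp (s i2) (s i0)).

Definition Tstar (k : 'I_3) (X : triple -> Prop) : triple -> Prop :=
  fun y => inB y /\ exists x, X x /\ inB x /\ y k = x k.

(* E_kk = B; for k <> l with third index m, E_kl = { s in B : s_m <= 1' } *)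
Definition Ediag (k l : 'I_3) : triple -> Prop :=
  fun s => inB s /\
    (k = l \/ forall m : 'I_3, m <> k -> m <> l -> wa_le (s m) (wa_id A)).

Definition capB (X Y : triple -> Prop) : triple -> Prop := fun s => X s /\ Y s.
End Ops.

(* A triple of E_κλ is a triple of B whose μ-th component is an identity atom;
   it is determined by its κ-th component a, its λ-th component being a, or a˘
   when μ = 1.  So each step T*_κ(E_κλ ∩ T*_λ Y) of the merry-go-round carries
   the κ-th component a to the λ-th one, provided such a triple exists, i.e.
   provided a has a left, resp. right, identity atom.  Going once around the
   indices 0, 1, 2, in either direction, converses exactly once, and the three
   side conditions together say that a has both a left and a right identity
   atom.  Hence both sides are {s ∈ B : s_κ has left and right identity atoms
   and s_κ˘ is the κ-th component of some x ∈ X ∩ B}. *)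

From mathcomp Require Import all_boot.
From Stdlib Require Import Setoid.
Set Implicit Arguments. Unset Strict Implicit. Unset Printing Implicit Defensive.

Declare Scope wa_scope.

Lemma ord3P (i : 'I_3) : i = i0 \/ i = i1 \/ i = i2.
Proof. by case: i => -[|[|[|//]]] ?; [left | right; left | right; right]; apply: val_inj. Qed.

Lemma ord3_third (k l m i : 'I_3) :
  k <> l -> l <> m -> k <> m -> i <> k -> i <> l -> i = m.
Proof.
by have [->|[->|->]] := ord3P k; have [->|[->|->]] := ord3P l;
  have [->|[->|->]] := ord3P m; have [->|[->|->]] := ord3P i.
Qed.

Section WeaklyAssociative.
Variable A : WA.
Hypothesis HA : is_WA A.

Local Notation "x + y" := (@wa_add A x y) : wa_scope.
Local Notation "- x" := (@wa_compl A x) : wa_scope.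
Local Notation "x ⨾ y" := (@wa_comp A x y) (at level 40, left associativity) : wa_scope.
Local Notation "x ˘" := (@wa_conv A x) (at level 2, format "x ˘") : wa_scope.
Local Notation "1'" := (@wa_id A) : wa_scope.
Local Notation "x <= y" := (@wa_le A x y) : wa_scope.
Local Notation top := (@wa_top A).
Local Notation bot := (@wa_bot A).
Local Open Scope wa_scope.

Lemma wa_addC (x y : A) : x + y = y + x.
Proof. by case: HA. Qed.
Lemma wa_addA (x y z : A) : x + (y + z) = x + y + z.
Proof. by case: HA => _ []. Qed.
Lemma wa_huntington (x y : A) : - (- x + - y) + - (- x + y) = x.
Proof. by case: HA => _ [] _ []. Qed.
Lemma wa_compDl (x y z : A) : (x + y) ⨾ z = x ⨾ z + y ⨾ z.
Proof. by case: HA => _ [] _ [] _ [] _ []. Qed.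
Lemma wa_comp1 (x : A) : x ⨾ 1' = x.
Proof. by case: HA => _ [] _ [] _ [] _ [] _ []. Qed.
Lemma wa_convK (x : A) : x˘˘ = x.
Proof. by case: HA => _ [] _ [] _ [] _ [] _ [] _ []. Qed.
Lemma wa_convD (x y : A) : (x + y)˘ = x˘ + y˘.
Proof. by case: HA => _ [] _ [] _ [] _ [] _ [] _ [] _ []. Qed.
Lemma wa_convM (x y : A) : (x ⨾ y)˘ = y˘ ⨾ x˘.
Proof. by case: HA => _ [] _ [] _ [] _ [] _ [] _ [] _ [] _ []. Qed.
Lemma wa_cycle (x y : A) : x˘ ⨾ - (x ⨾ y) + - y = - y.
Proof. by case: HA => _ [] _ [] _ [] _ [] _ [] _ [] _ [] _ []. Qed.

Lemma wa_addCA (x y z : A) : x + (y + z) = y + (x + z).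
Proof. by rewrite wa_addA (wa_addC x y) -wa_addA. Qed.
Lemma wa_addAC (x y z : A) : x + y + z = x + z + y.
Proof. by rewrite -wa_addA (wa_addC y z) wa_addA. Qed.
Lemma wa_addACA (x y z w : A) : x + y + (z + w) = x + z + (y + w).
Proof. by rewrite -!wa_addA (wa_addCA y). Qed.

(* Huntington's classical derivation of the Boolean laws. *)
Lemma wa_complK (x : A) : - - x = x.
Proof.
have addN_addNN (y : A) : y + - y = - y + - - y.
  set y1 := - y; set y2 := - y1; set y3 := - y2.
  have hA : - (y2 + y2) + - (y2 + y1) = y1 := wa_huntington y1 y1.
  have hB : - (y3 + y2) + - (y3 + y1) = y2 := wa_huntington y2 y1.
  have hC : - (y2 + y3) + - (y2 + y2) = y1 := wa_huntington y1 y2.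
  have hD : - (y1 + y3) + - (y1 + y2) = y := wa_huntington y y2.
  have -> : y1 + y2 = - (y2 + y2) + - (y2 + y1) + (- (y3 + y2) + - (y3 + y1)).
    by rewrite hA hB.
  rewrite -{1}hC -{1}hD wa_addC wa_addACA.
  by rewrite (wa_addC y2 y1) (wa_addC y3 y2) (wa_addC y3 y1) wa_addC.
have e : - - - x + - - x = - x + - - x by rewrite wa_addC -addN_addNN.
have := wa_huntington (- - x) (- x).
rewrite e (wa_addC (- - - x) (- x)) wa_addC => <-.
exact: (wa_huntington x (- - x)).
Qed.

Lemma wa_addN (x : A) : x + - x = top.
Proof.
suff addN_const (y : A) : x + - x = y + - y by exact: addN_const.
have E : - (- x + - y) + - (- x + y) + (- (x + - y) + - (x + y)) =
         - (- y + - x) + - (- y + x) + (- (y + - x) + - (y + x)).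
  rewrite (wa_addC (- y) (- x)) (wa_addC (- y) x) (wa_addC y (- x)) (wa_addC y x).
  by rewrite wa_addACA (wa_addC (- (- x + y))).
have hx' := wa_huntington (- x) y; have hy' := wa_huntington (- y) x.
rewrite wa_complK in hx'; rewrite wa_complK in hy'.
by rewrite wa_huntington hx' wa_huntington hy' in E.
Qed.

Lemma wa_addNx (x : A) : - x + x = top.
Proof. by rewrite -{2}(wa_complK x) wa_addN. Qed.

Lemma wa_compl_idem (x : A) : - (- x + - x) + bot = x.
Proof. by have := wa_huntington x x; rewrite wa_addNx. Qed.

Lemma wa_addT (x : A) : x + top = top.
Proof.
suff addNT (y : A) : - y + top = top by rewrite -(wa_complK x) addNT.
have e : - (- y + - y) + - - (- y + - y) + bot = - y + (y + - y).
  by rewrite (wa_complK (- y + - y)) wa_addAC wa_compl_idem wa_addCA.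
by rewrite !wa_addN in e.
Qed.

Lemma wa_add0x (x : A) : bot + x = x.
Proof.
have bot_idem : bot + bot = bot.
  by have := wa_compl_idem bot; rewrite /wa_bot wa_complK wa_addT.
by rewrite -(wa_compl_idem x) wa_addCA bot_idem.
Qed.

Lemma wa_addxx (x : A) : x + x = x.
Proof.
have := wa_compl_idem (- x); rewrite wa_addC wa_add0x !wa_complK => e.
by rewrite -(wa_complK (x + x)) e wa_complK.
Qed.

Lemma wa_le_trans (x y z : A) : x <= y -> y <= z -> x <= z.
Proof. by rewrite /wa_le => h1 h2; rewrite -h2 wa_addA h1. Qed.

Lemma wa_le_anti (x y : A) : x <= y -> y <= x -> x = y.
Proof. by rewrite /wa_le => h1 h2; rewrite -h1 -{1}h2 wa_addC. Qed.

Lemma wa_le0x (x : A) : bot <= x.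
Proof. exact: wa_add0x. Qed.

Lemma wa_mul_lel (x y : A) : wa_mul x y <= x.
Proof. by rewrite /wa_le /wa_mul -{2 3}(wa_huntington x y) wa_addA wa_addxx. Qed.

Lemma wa_mulC (x y : A) : wa_mul x y = wa_mul y x.
Proof. by rewrite /wa_mul wa_addC. Qed.

Lemma wa_le_compl_eq0 (x : A) : x <= - x -> x = bot.
Proof. by rewrite /wa_le wa_addN => h; rewrite -(wa_complK x) -h. Qed.

Lemma atom_le_or_le_compl (a x : A) : is_atom a -> a <= x \/ a <= - x.
Proof.
case=> _ min_a; case: (min_a _ (wa_mul_lel a x)) => [a_x0 | <-].
- right; have := wa_huntington a x.
  rewrite -/(wa_mul a x) a_x0 wa_add0x => <-.
  by rewrite -{1}(wa_complK x) -/(wa_mul a (- x)) wa_mulC; apply: wa_mul_lel.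
- by left; rewrite wa_mulC; apply: wa_mul_lel.
Qed.

Lemma atom_le_eq (a b : A) : is_atom a -> is_atom b -> a <= b -> a = b.
Proof. by case=> a0 _ [_ min_b] /min_b []. Qed.

Lemma wa_compSl (x y z : A) : x <= y -> x ⨾ z <= y ⨾ z.
Proof. by rewrite /wa_le => h; rewrite -wa_compDl h. Qed.

Lemma wa_convS (x y : A) : x <= y -> x˘ <= y˘.
Proof. by rewrite /wa_le => h; rewrite -wa_convD h. Qed.

Lemma wa_convSE (x y : A) : (x˘ <= y˘) <-> (x <= y).
Proof. by split=> [/wa_convS|/wa_convS //]; rewrite !wa_convK. Qed.

Lemma wa_compSr (x y z : A) : x <= y -> z ⨾ x <= z ⨾ y.
Proof. by move=> h; apply/wa_convSE; rewrite !wa_convM; apply/wa_compSl/wa_convS. Qed.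

Lemma wa_conv_comp_le (x y z : A) : x <= y ⨾ z -> x˘ <= z˘ ⨾ y˘.
Proof. by rewrite -wa_convM; apply: wa_convS. Qed.

Lemma wa_conv1 : 1'˘ = 1'.
Proof. by have := wa_convM 1'˘ 1'; rewrite wa_comp1 !wa_convK wa_comp1 => /esym. Qed.

Lemma wa_comp1x (x : A) : 1' ⨾ x = x.
Proof. by rewrite -{1}wa_conv1 -{1}(wa_convK x) -wa_convM wa_comp1 wa_convK. Qed.

Lemma wa_conv0 : bot˘ = bot.
Proof.
apply: wa_le_anti; last exact: wa_le0x.
by rewrite -{2}(wa_convK bot); apply/wa_convS/wa_le0x.
Qed.

Lemma is_atom_conv (a : A) : is_atom a˘ <-> is_atom a.
Proof.
suff conv_atom (b : A) : is_atom b -> is_atom b˘.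
  by split=> [/conv_atom|/conv_atom //]; rewrite wa_convK.
case=> b0 min_b; split=> [e|c /wa_convSE].
  by apply: b0; rewrite -(wa_convK b) e wa_conv0.
rewrite wa_convK => /min_b [c0|cb]; [left | right].
  by rewrite -(wa_convK c) c0 wa_conv0.
by rewrite -cb wa_convK.
Qed.

Lemma atom_cycle (x y z : A) : z <= x ⨾ y -> z <> bot -> is_atom y -> y <= x˘ ⨾ z.
Proof.
move=> zxy z0 /(atom_le_or_le_compl (x˘ ⨾ z)) [//|y_compl].
case: z0; apply/wa_le_compl_eq0/(wa_le_trans zxy)/(wa_le_trans (wa_compSr x y_compl)).
by have := wa_cycle x˘ z; rewrite wa_convK.
Qed.

Definition id_atom (e : A) : Prop := is_atom e /\ e <= 1'.

Lemma id_atom_conv (e : A) : id_atom e -> id_atom e˘.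
Proof. by case=> ae e1; split; [apply/is_atom_conv | rewrite -wa_conv1; apply: wa_convS]. Qed.

Definition has_left_id (a : A) : Prop := exists2 e, id_atom e & a <= e ⨾ a.
Definition has_right_id (a : A) : Prop := exists2 e, id_atom e & a <= a ⨾ e.

Lemma has_left_id_conv (a : A) : has_left_id a˘ <-> has_right_id a.
Proof.
split=> -[e ide ae]; exists e˘; try exact: id_atom_conv.
  by have := wa_conv_comp_le ae; rewrite wa_convK.
exact: wa_conv_comp_le.
Qed.

Lemma has_right_id_conv (a : A) : has_right_id a˘ <-> has_left_id a.
Proof. by rewrite -has_left_id_conv wa_convK. Qed.

Lemma has_right_idE (a : A) : is_atom a ->
  has_right_id a <-> exists2 e, id_atom e & e <= a˘ ⨾ a.
Proof.
move=> aa; split=> -[e [ae e1] h]; exists e => //.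
  by apply: (atom_cycle h _ ae); case: aa.
by have := atom_cycle h (proj1 ae) aa; rewrite wa_convK.
Qed.

Lemma has_left_idE (a : A) : is_atom a ->
  has_left_id a <-> exists2 e, id_atom e & e <= a ⨾ a˘.
Proof.
by move=> aa; rewrite -has_right_id_conv has_right_idE ?is_atom_conv // wa_convK.
Qed.

Lemma inBE (s : triple A) : inB s <->
  [/\ is_atom (s i0), is_atom (s i1), is_atom (s i2) & s i1 <= s i2 ⨾ s i0].
Proof.
split=> [[atoms le_s] | [a0 a1 a2 le_s]]; first by split.
by split=> // i; have [->|[->|->]] := ord3P i.
Qed.

Definition tri (x0 x1 x2 : A) : triple A :=
  fun i => if i == i0 then x0 else if i == i1 then x1 else x2.

Lemma inB_tri (x0 x1 x2 : A) : inB (tri x0 x1 x2) <->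
  [/\ is_atom x0, is_atom x1, is_atom x2 & x1 <= x2 ⨾ x0].
Proof. exact: inBE. Qed.

Lemma inB_id0 (s : triple A) : inB s -> id_atom (s i0) -> s i1 = s i2.
Proof.
case/inBE=> _ a1 a2 le_s [_ e1]; apply: (atom_le_eq a1 a2).
by apply: (wa_le_trans le_s); rewrite -{2}(wa_comp1 (s i2)); apply: wa_compSr.
Qed.

Lemma inB_id2 (s : triple A) : inB s -> id_atom (s i2) -> s i1 = s i0.
Proof.
case/inBE=> a0 a1 _ le_s [_ e1]; apply: (atom_le_eq a1 a0).
by apply: (wa_le_trans le_s); rewrite -{2}(wa_comp1x (s i0)); apply: wa_compSl.
Qed.

Lemma inB_id1 (s : triple A) : inB s -> id_atom (s i1) -> s i0 = (s i2)˘.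
Proof.
case/inBE=> a0 _ a2 le_s [[e0 _] e1]; apply: (atom_le_eq a0); first exact/is_atom_conv.
apply: (wa_le_trans (atom_cycle le_s e0 a0)).
by rewrite -{2}(wa_comp1 (s i2)˘); apply: wa_compSr.
Qed.

(* Read s as a triangle with edges s_2 : 0 -> 1, s_0 : 1 -> 2 and s_1 : 0 -> 2,
   so that inB s says s_1 <= s_2 ⨾ s_0.  An identity atom at p glues the two
   vertices other than p: the two remaining edges then coincide, up to converse
   when p = 1, and the glued vertex is the head of edge q iff [right_sided p q]. *)
Definition conv_at (p : 'I_3) (a : A) : A := if p == i1 then a˘ else a.

Lemma inB_id_conv_at (s : triple A) (p q r : 'I_3) :
  inB s -> id_atom (s p) -> q <> p -> r <> p -> r <> q -> s r = conv_at p (s q).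
Proof.
move=> sB sp; rewrite /conv_at.
have [ep|[ep|ep]] := ord3P p; rewrite ep /= in sp *;
  have [->|[->|->]] := ord3P q; have [->|[->|->]] := ord3P r => //= _ _ _.
- by rewrite (inB_id0 sB sp).
- by rewrite (inB_id0 sB sp).
- by rewrite (inB_id1 sB sp) wa_convK.
- by rewrite (inB_id1 sB sp).
- by rewrite (inB_id2 sB sp).
- by rewrite (inB_id2 sB sp).
Qed.

Definition right_sided (p q : 'I_3) : bool := (p == i0) || (p == i1) && (q == i0).

Definition diag_triple (p q : 'I_3) (a : A) : Prop :=
  exists t, [/\ inB t, id_atom (t p) & t q = a].

Lemma diag_tripleE (p q : 'I_3) (a : A) : q <> p ->
  diag_triple p q a <->
  is_atom a /\ (if right_sided p q then has_right_id a else has_left_id a).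
Proof.
move=> qp; split=> [[t [tB tp <-]] | [aa ha]].
  case/inBE: (tB) => a0 a1 a2 le_t.
  have [ep|[ep|ep]] := ord3P p; rewrite ep in tp qp *;
    have [eq|[eq|eq]] := ord3P q; rewrite eq //= in qp *; split=> //.
  - by exists (t i0); rewrite // -(inB_id0 tB tp) in le_t.
  - by exists (t i0); rewrite // (inB_id0 tB tp) in le_t.
  - apply/has_right_idE => //; exists (t i1) => //.
    by rewrite (inB_id1 tB tp) wa_convK; rewrite (inB_id1 tB tp) in le_t.
  - apply/has_left_idE => //; exists (t i1) => //.
    by rewrite -(inB_id1 tB tp).
  - by exists (t i2); rewrite // (inB_id2 tB tp) in le_t.
  - by exists (t i2); rewrite // -(inB_id2 tB tp) in le_t.
have [ep|[ep|ep]] := ord3P p; rewrite ep in qp ha *;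
  have [eq|[eq|eq]] := ord3P q; rewrite eq //= in qp ha *.
- case: ha => e [ae e1] le_a; exists (tri e a a); split=> //; exact/inB_tri.
- case: ha => e [ae e1] le_a; exists (tri e a a); split=> //; exact/inB_tri.
- case/has_right_idE: ha => // e [ae e1] le_e; exists (tri a e a˘); split=> //.
  by apply/inB_tri; split=> //; apply/is_atom_conv.
- case/has_left_idE: ha => // e [ae e1] le_e; exists (tri a˘ e a); split=> //.
  by apply/inB_tri; split=> //; apply/is_atom_conv.
- case: ha => e [ae e1] le_a; exists (tri a a e); split=> //; exact/inB_tri.
- case: ha => e [ae e1] le_a; exists (tri a a e); split=> //; exact/inB_tri.
Qed.

Lemma diag_triple_cycle (k l m : 'I_3) (a : A) : k <> l -> l <> m -> k <> m ->
  diag_triple m k a /\ diag_triple k l (conv_at m a) /\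
    diag_triple l m (conv_at k (conv_at m a)) <->
  is_atom a /\ has_left_id a /\ has_right_id a.
Proof.
have [->|[->|->]] := ord3P k; have [->|[->|->]] := ord3P l;
  have [->|[->|->]] := ord3P m => //= _ _ _;
  rewrite /conv_at /= !diag_tripleE //= ?is_atom_conv ?has_left_id_conv ?has_right_id_conv;
  tauto.
Qed.

Lemma conv_at_cycle (k l m : 'I_3) (a : A) : k <> l -> l <> m -> k <> m ->
  conv_at l (conv_at k (conv_at m a)) = a˘.
Proof.
by have [->|[->|->]] := ord3P k; have [->|[->|->]] := ord3P l;
  have [->|[->|->]] := ord3P m.
Qed.

Lemma EdiagE (k l m : 'I_3) (t : triple A) : k <> l -> l <> m -> k <> m ->
  Ediag k l t <-> inB t /\ id_atom (t m).
Proof.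
move=> kl lm km; split=> [[tB [//|t1]] | [tB [_ tm1]]].
  split=> //; split; first by case: tB.
  by apply: t1 => e; [apply: km | apply: lm].
by split=> //; right=> i ik il; rewrite (ord3_third kl lm km ik il).
Qed.

Definition coord_image (k : 'I_3) (Y : triple A -> Prop) (a : A) : Prop :=
  exists x, Y x /\ inB x /\ a = x k.

Lemma TstarE (k : 'I_3) (Y : triple A -> Prop) (s : triple A) :
  Tstar k Y s <-> inB s /\ coord_image k Y (s k).
Proof. by []. Qed.

Lemma coord_image_Ediag_Tstar (k l m : 'I_3) (Y : triple A -> Prop) (a : A) :
  k <> l -> l <> m -> k <> m ->
  coord_image k (capB (Ediag k l) (Tstar l Y)) a <->
  diag_triple m k a /\ coord_image l Y (conv_at m a).
Proof.
move=> kl lm km.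
have t_l (t : triple A) : inB t -> id_atom (t m) -> t l = conv_at m (t k).
  by move=> tB tm; apply: inB_id_conv_at => // /esym.
split=> [[t [[/(EdiagE _ kl lm km) [tB tm] [_ Yl]] [_ ->]]] | [[t [tB tm tk]] Yl]].
  by split; [exists t | rewrite -t_l].
exists t; split; last by rewrite tk.
by split; [apply/(EdiagE _ kl lm km) | split; last rewrite t_l // tk].
Qed.

Lemma merry_go_roundE (X : triple A -> Prop) (k l m : 'I_3) (s : triple A) :
  k <> l -> l <> m -> k <> m ->
  Tstar k (capB (Ediag k l) (Tstar l (capB (Ediag l m)
    (Tstar m (capB (Ediag m k) (Tstar k X)))))) s <->
  inB s /\ has_left_id (s k) /\ has_right_id (s k) /\ coord_image k X (s k)˘.
Proof.
move=> kl lm km.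
have lk : l <> k by move/esym.
have ml : m <> l by move/esym.
have mk : m <> k by move/esym.
rewrite TstarE (@coord_image_Ediag_Tstar k l m) // (@coord_image_Ediag_Tstar l m k) //
  (@coord_image_Ediag_Tstar m k l) // conv_at_cycle //.
have := diag_triple_cycle (s k) kl lm km.
suff : inB s -> is_atom (s k) by tauto.
by case=> atoms _; apply: atoms.
Qed.

End WeaklyAssociative.

Theorem lemma7 (A : WA) (HA : is_WA A) (Hat : atomic A)
  (X : triple A -> Prop) (HX : forall s, X s -> inB s)
  (k l m : 'I_3) (Hkl : k <> l) (Hlm : l <> m) (Hkm : k <> m) :
  forall s : triple A,
    Tstar k (capB (Ediag k l) (Tstar l (capB (Ediag l m)
      (Tstar m (capB (Ediag m k) (Tstar k X)))))) s
    <->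
    Tstar k (capB (Ediag k m) (Tstar m (capB (Ediag m l)
      (Tstar l (capB (Ediag l k) (Tstar k X)))))) s.
Proof.
move=> s; have Hml : m <> l by move/esym.
by rewrite !(merry_go_roundE HA).
Qed.
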